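(* Let $n\ge2$ and $j\in[n]$. For every integer $m\ge2$, $r(m,n)\le r(m+1,n)$ and $R_j(m,n)\subseteq R_j(m+1,n)$.
   Context: General product of dimension-$n$ tensors: for $\mathbb{A}$ of order $m\ge2$ and $\mathbb{B}$ of order $k\ge1$, $(\mathbb{A}\mathbb{B})_{i\alpha_1\ldots\alpha_{m-1}}=\sum_{i_2,\ldots,i_m=1}^n a_{ii_2\ldots i_m}b_{i_2\alpha_1}\cdots b_{i_m\alpha_{m-1}}$ ($\alpha_l\in[n]^{k-1}$); it is associative and $\mathbb{A}^k$ denotes the $k$-fold power. The majorization matrix is $(M(\mathbb{C}))_{ij}=c_{ij\ldots j}$. A nonnegative tensor $\mathbb{A}$ is primitive if $M(\mathbb{A}^r)>0$ entrywise for some $r\ge1$. For $j\in[n]$, $\mathbb{A}$ is $j$-primitive if there is $k\ge1$ with $(M(\mathbb{A}^k))_{uj}>0$ for all $u\in[n]$; the least such $k$ is $\gamma_j(\mathbb{A})$. $r(m,n)$ is the maximum of $\gamma_j(\mathbb{A})$ over all nonnegative, non-primitive tensors $\mathbb{A}$ of order $m$ and dimension $n$ and all $j\in[n]$ such that $\mathbb{A}$ is $j$-primitive. $R_j(m,n)$ is the set of integers $k$ such that there exists a nonnegative, non-primitive tensor $\mathbb{A}$ of order $m$ and dimension $n$ that is $j$-primitive with $\gamma_j(\mathbb{A})=k$. *)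

From HB Require Import structures.
From mathcomp Require Import all_boot all_order all_algebra.
From mathcomp Require Import reals.
Set Implicit Arguments. Unset Strict Implicit. Unset Printing Implicit Defensive.
Import Order.TTheory GRing.Theory Num.Theory.
Local Open Scope ring_scope.

Section Tensors.
Variables (R : realType) (n : nat).

Definition tensor (m : nat) := {ffun m.-tuple 'I_n -> R}.

(* Entry lookup by a list of indices (0 if the list has the wrong length;
   only used with lists of the right length below). *)
Definition ent (m : nat) (A : tensor m) (s : seq 'I_n) : R :=
  if insub s is Some t then A t else 0.

(* General product: for A of order m and B of order k,
   (AB)_{i a_1 .. a_{m-1}} = sum_{i_2..i_m} a_{i i_2 .. i_m} b_{i_2 a_1} ... b_{i_m a_{m-1}},
   with a_l in [n]^{k-1}; the result has order (m-1)(k-1)+1. *)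
Definition tmul (m k : nat) (A : tensor m) (B : tensor k) :
    tensor ((m.-1) * (k.-1)).+1 :=
  [ffun s => let i := thead s in
     let chunks := reshape (nseq m.-1 k.-1) (behead s) in
     \sum_(t : (m.-1).-tuple 'I_n)
        ent A (i :: t) * \prod_(l < m.-1) ent B (tnth t l :: nth [::] chunks l)].

(* tpow_aux A k = A^(k+1), with A^(k+1) = A A^k. *)
Fixpoint tpow_aux (m : nat) (A : tensor m) (k : nat) : {o : nat & tensor o} :=
  match k with
  | 0 => existT _ m A
  | k'.+1 => let P := tpow_aux A k' in existT _ _ (tmul A (projT2 P))
  end.

Definition tpow (m : nat) (A : tensor m) (k : nat) : {o : nat & tensor o} :=
  tpow_aux A k.-1.

Definition majmx (o : nat) (C : tensor o) : 'M[R]_n :=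
  \matrix_(i, j) ent C (i :: nseq o.-1 j).

Definition Mpow (m : nat) (A : tensor m) (k : nat) : 'M[R]_n :=
  majmx (projT2 (tpow A k)).

Definition nonneg_tensor (m : nat) (A : tensor m) : Prop :=
  forall t, 0 <= A t.

Definition primitive (m : nat) (A : tensor m) : Prop :=
  exists r : nat, (1 <= r)%N /\ forall i j, 0 < Mpow A r i j.

Definition jpos (m : nat) (A : tensor m) (j : 'I_n) (k : nat) : Prop :=
  (1 <= k)%N /\ forall u, 0 < Mpow A k u j.

Definition j_primitive (m : nat) (A : tensor m) (j : 'I_n) : Prop :=
  exists k, jpos A j k.

Definition gamma_is (m : nat) (A : tensor m) (j : 'I_n) (k : nat) : Prop :=
  jpos A j k /\ forall k', (1 <= k')%N -> (k' < k)%N -> ~ jpos A j k'.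

Definition Rj (m : nat) (j : 'I_n) (k : nat) : Prop :=
  exists A : tensor m, [/\ nonneg_tensor A, ~ primitive A, j_primitive A j
                         & gamma_is A j k].

Definition r_is (m : nat) (v : nat) : Prop :=
  (exists j, Rj m j v) /\ (forall j k, Rj m j k -> (k <= v)%N).

End Tensors.

From HB Require Import structures.
From mathcomp Require Import all_boot all_order all_algebra.
From mathcomp Require Import reals.
Set Implicit Arguments. Unset Strict Implicit. Unset Printing Implicit Defensive.
Import Order.TTheory GRing.Theory Num.Theory.
Local Open Scope ring_scope.

(* Only the zero pattern of the matrices M(A^k) matters.  Extending a tensor A
   of order m to order m+1 by letting its entries ignore the last index
   replaces every witness of positivity of (M(A^(k+1)))_ij, namely an index
   list (i_2, ..., i_m) with a_{i i_2 .. i_m} > 0 and (M(A^k))_{i_l j} > 0,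
   by the same list with its first index repeated at the end, and conversely
   by truncation.  So the lift has exactly the zero patterns of A: it is
   nonnegative, non-primitive and j-primitive with the same gamma_j. *)

Lemma reshape_nseq (T : Type) a b (x : T) :
  reshape (nseq a b) (nseq (a * b) x) = nseq a (nseq b x).
Proof.
elim: a => [|a IH] //=.
by rewrite mulSn nseqD take_size_cat ?size_nseq // drop_size_cat ?size_nseq // IH.
Qed.

Lemma psumr_gt0P (R : numDomainType) (I : finType) (F : I -> R) :
  (forall i, 0 <= F i) -> reflect (exists i, 0 < F i) (0 < \sum_i F i).
Proof.
move=> F_ge0; apply: (iffP idP) => [sum_gt0 | [i Fi_gt0]].
  have [|i /andP[_ Fi_gt0]] := @psumr_neq0P _ _ xpredT F (fun i _ => F_ge0 i).
    by apply/eqP; rewrite gt_eqF.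
  by exists i.
rewrite (bigD1 i) //=; apply: ltr_wpDr => //.
exact: sumr_ge0.
Qed.

Lemma pprodr_gt0P (R : numDomainType) (k : nat) (F : 'I_k -> R) :
  (forall l, 0 <= F l) -> reflect (forall l, 0 < F l) (0 < \prod_l F l).
Proof.
move=> F_ge0; apply: (iffP idP) => [prod_gt0 l | F_gt0]; last exact: prodr_gt0.
have /prodf_neq0/(_ l isT) Fl_neq0 : \prod_l F l != 0 by rewrite gt_eqF.
by rewrite lt_def Fl_neq0 F_ge0.
Qed.

Section GeneralProduct.
Variables (R : realType) (n : nat).

Lemma ent_tuple m (A : tensor R n m) (t : m.-tuple 'I_n) : ent A t = A t.
Proof. by rewrite /ent valK. Qed.

Lemma ent_ge0 m (A : tensor R n m) s : nonneg_tensor A -> 0 <= ent A s.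
Proof. by move=> A_ge0; rewrite /ent; case: insub. Qed.

Lemma majmx_tmul m k (A : tensor R n m) (B : tensor R n k) i j :
  majmx (tmul A B) i j =
  \sum_(t : (m.-1).-tuple 'I_n) ent A (i :: t) *
      \prod_(l < m.-1) majmx B (tnth t l) j.
Proof.
have diag_size : size (i :: nseq (m.-1 * k.-1) j) == (m.-1 * k.-1).+1.
  by rewrite /= size_nseq.
rewrite /majmx mxE -[i :: _]/(tval (Tuple diag_size)) ent_tuple ffunE.
apply: eq_bigr => t _; rewrite [thead _](tnth_nth i) /=.
congr (_ * _); apply: eq_bigr => l _.
by rewrite mxE reshape_nseq nth_nseq ltn_ord.
Qed.

Lemma MpowS m (A : tensor R n m) k : (0 < k)%N ->
  Mpow A k.+1 = majmx (tmul A (projT2 (tpow A k))).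
Proof. by case: k. Qed.

Lemma Mpow_ge0 m (A : tensor R n m) k i j :
  nonneg_tensor A -> 0 <= Mpow A k i j.
Proof.
move=> A_ge0; elim: k i => [|[|k] IH] i; try by rewrite /Mpow /majmx mxE ent_ge0.
rewrite MpowS // majmx_tmul; apply: sumr_ge0 => t _.
by apply: mulr_ge0; [exact: ent_ge0 | apply: prodr_ge0 => l _; exact: IH].
Qed.

Lemma sum_ent_prod_gt0 m (A : tensor R n m) (M : 'M[R]_n) i j :
  nonneg_tensor A -> (forall u, 0 <= M u j) ->
  (0 < \sum_(t : (m.-1).-tuple 'I_n) ent A (i :: t) *
         \prod_(l < m.-1) M (tnth t l) j) <->
  exists2 s : seq 'I_n, size s = m.-1 &
    0 < ent A (i :: s) /\ all (fun u => 0 < M u j) s.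
Proof.
move=> A_ge0 M_ge0.
have term_ge0 (t : (m.-1).-tuple 'I_n) :
    0 <= ent A (i :: t) * \prod_(l < m.-1) M (tnth t l) j.
  by apply: mulr_ge0; [exact: ent_ge0 | exact: prodr_ge0].
split=> [/(psumr_gt0P term_ge0) [t] | [s s_size [a_gt0 s_pos]]].
  rewrite lt_def mulf_eq0 negb_or => /andP[/andP[a_neq0 p_neq0] _].
  exists (val t); first by rewrite size_tuple.
  split; first by rewrite lt_def a_neq0 ent_ge0.
  have /pprodr_gt0P t_pos : 0 < \prod_(l < m.-1) M (tnth t l) j.
    by rewrite lt_def p_neq0 prodr_ge0.
  by apply/allP => u /tnthP [l ->]; apply: t_pos.
have s_tuple : size s == m.-1 by rewrite s_size.
apply/(psumr_gt0P term_ge0); exists (Tuple s_tuple).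
rewrite mulr_gt0 //; apply/pprodr_gt0P => // l.
exact/(allP s_pos)/mem_tnth.
Qed.

End GeneralProduct.

Section LiftOrder.
Variables (R : realType) (n p : nat) (A : tensor R n p.+2).
Hypothesis A_ge0 : nonneg_tensor A.

Definition tlift : tensor R n p.+3 :=
  [ffun t : p.+3.-tuple 'I_n => ent A (take p.+2 t)].

Lemma tlift_ge0 : nonneg_tensor tlift.
Proof. by move=> t; rewrite ffunE ent_ge0. Qed.

Lemma ent_tlift i (s : seq 'I_n) : size s = p.+2 ->
  ent tlift (i :: s) = ent A (i :: take p.+1 s).
Proof.
move=> s_size; have is_size : size (i :: s) == p.+3 by rewrite /= s_size.
by rewrite -[i :: s]/(tval (Tuple is_size)) ent_tuple ffunE.
Qed.

Lemma tlift_witnessP (P : pred 'I_n) i :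
  (exists2 s, size s = p.+2 & 0 < ent tlift (i :: s) /\ all P s) <->
  (exists2 s, size s = p.+1 & 0 < ent A (i :: s) /\ all P s).
Proof.
split=> [[s s_size [a_gt0 s_P]] | [[|x s] // s_size [a_gt0 s_P]]].
  exists (take p.+1 s); first by rewrite size_take s_size ltnSn.
  split; first by rewrite -ent_tlift.
  by apply/allP => u /mem_take; apply: (allP s_P).
exists (rcons (x :: s) x); first by rewrite size_rcons s_size.
rewrite ent_tlift ?size_rcons ?s_size // -cats1 take_size_cat //.
by rewrite all_cat s_P /= andbT; case/andP: s_P.
Qed.

Lemma sum_tlift_prod_gt0 (M N : 'M[R]_n) i j :
  (forall u, 0 <= M u j) -> (forall u, 0 <= N u j) ->
  (forall u, (0 < M u j) = (0 < N u j)) ->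
  (0 < \sum_(t : p.+2.-tuple 'I_n) ent tlift (i :: t) *
         \prod_(l < p.+2) M (tnth t l) j) =
  (0 < \sum_(t : p.+1.-tuple 'I_n) ent A (i :: t) *
         \prod_(l < p.+1) N (tnth t l) j).
Proof.
move=> M_ge0 N_ge0 MN_pos.
apply/idP/idP.
  case/(sum_ent_prod_gt0 i tlift_ge0 M_ge0)/tlift_witnessP => s s_size [a_gt0 s_M].
  apply/(sum_ent_prod_gt0 i A_ge0 N_ge0); exists s => //.
  by rewrite -(eq_all MN_pos).
case/(sum_ent_prod_gt0 i A_ge0 N_ge0) => s s_size [a_gt0 s_N].
apply/(sum_ent_prod_gt0 i tlift_ge0 M_ge0)/tlift_witnessP; exists s => //.
by rewrite (eq_all MN_pos).
Qed.

Lemma Mpow_tlift_gt0 k i j : (0 < k)%N ->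
  (0 < Mpow tlift k i j) = (0 < Mpow A k i j).
Proof.
elim: k i => [|[|k] IH] i // _.
  by rewrite /Mpow /majmx !mxE ent_tlift ?size_nseq // take_nseq.
rewrite !MpowS // !majmx_tmul; apply: sum_tlift_prod_gt0 => u.
- exact: Mpow_ge0 tlift_ge0.
- exact: Mpow_ge0.
- exact: IH.
Qed.

Lemma jpos_tlift j k : jpos tlift j k <-> jpos A j k.
Proof.
by split=> -[k_gt0 col_pos]; split=> // u;
  rewrite ?Mpow_tlift_gt0 // -?Mpow_tlift_gt0.
Qed.

Lemma primitive_tlift : primitive tlift <-> primitive A.
Proof.
by split=> -[r [r_gt0 pos]]; exists r; split=> // i j;
  rewrite ?Mpow_tlift_gt0 // -?Mpow_tlift_gt0.
Qed.

End LiftOrder.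

Lemma Rj_succ (R : realType) (n m : nat) (j : 'I_n) (k : nat) :
  (2 <= m)%N -> Rj R m j k -> Rj R m.+1 j k.
Proof.
case: m => [|[|p]] // _ [A [A_ge0 A_nprim [k0 A_jprim] [A_jpos A_min]]].
exists (tlift A); split.
- exact: tlift_ge0.
- by move/(primitive_tlift A_ge0).
- by exists k0; apply/(jpos_tlift A_ge0).
- split; first exact/(jpos_tlift A_ge0).
  by move=> k' k'_gt0 k'_lt /(jpos_tlift A_ge0); apply: A_min.
Qed.

Theorem proposition4p10 (R : realType) (n : nat) (j : 'I_n) (m : nat) :
  (2 <= n)%N -> (2 <= m)%N ->
  (forall v w : nat, r_is R n m v -> r_is R n m.+1 w -> (v <= w)%N) /\
  (forall k : nat, Rj R m j k -> Rj R m.+1 j k).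
Proof.
(* The lift works in every dimension. *)
move=> _ m_ge2; split=> [|k]; last exact: Rj_succ.
move=> v w [[j0 v_in_Rj] _] [_ w_max].
exact/(w_max j0)/(Rj_succ m_ge2).
Qed.
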